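(* Let $N$ be a finite set, $C\subseteq N$ with $|C|\ge2$, and $k\in\{1,\ldots,|C|-1\}$. The set function $m_{C,k}(S)=\max\{0,|S\cap C|-k\}$, $S\subseteq N$, is an extreme standardized supermodular function, and the objective $o(a|B)=m_{C,k}(\{a\}\cup B)-m_{C,k}(B)$, $(a|B)\in\Upsilon$, is exactly the objective of the $k$-cluster inequality $$\sum_{a\in C}\ \sum_{B\subseteq N\setminus\{a\}:\,|B\cap C|\ge k}\eta(a|B)\le |C|-k,$$ i.e. $o(a|B)=1$ if $a\in C$ and $|B\cap C|\ge k$, and $o(a|B)=0$ otherwise; moreover $\langle o,\eta_H\rangle=|C|-k$ for every full graph $H$ over $N$.
   Context: $\Upsilon=\{(a|B): a\in N,\ \emptyset\neq B\subseteq N\setminus\{a\}\}$; for an acyclic directed graph $G$ over $N$ with parent sets $\mathrm{pa}_G(a)$, $\eta_G\in\mathbb{R}^{\Upsilon}$ has $\eta_G(a|B)=1$ if $B=\mathrm{pa}_G(a)$, else $0$. A full graph is an acyclic directed graph over $N$ in which every pair of distinct nodes is adjacent. A set function $m:\mathcal{P}(N)\to\mathbb{R}$ is standardized if $m(S)=0$ for $|S|\le 1$, supermodular if $m(U)+m(V)\le m(U\cup V)+m(U\cap V)$ for all $U,V\subseteq N$; it is extreme if it generates an extreme ray of the (pointed polyhedral) cone of standardized supermodular functions. *)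

From mathcomp Require Import all_boot all_order all_algebra.
Set Implicit Arguments. Unset Strict Implicit. Unset Printing Implicit Defensive.
Import Order.TTheory GRing.Theory Num.Theory.
Local Open Scope ring_scope.

Section Defs.
Variables (R : realFieldType) (N : finType).

Definition standardized (m : {set N} -> R) : Prop :=
  forall S : {set N}, (#|S| <= 1)%N -> m S = 0.

Definition supermodular (m : {set N} -> R) : Prop :=
  forall U V : {set N}, m U + m V <= m (U :|: V) + m (U :&: V).

Definition std_supermod (m : {set N} -> R) : Prop :=
  standardized m /\ supermodular m.

Definition extreme (m : {set N} -> R) : Prop :=
  [/\ std_supermod m, (exists S, m S != 0) &
      forall m1 m2 : {set N} -> R, std_supermod m1 -> std_supermod m2 ->
        (forall S, m S = m1 S + m2 S) ->
        exists l : R, 0 <= l /\ forall S, m1 S = l * m S].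

(* directed graphs over N as edge relations; g b a means b -> a *)
Definition acyclic (g : rel N) : Prop :=
  forall a b : N, g a b -> ~~ connect g b a.

Definition full_graph (g : rel N) : Prop :=
  acyclic g /\ forall a b : N, a != b -> g a b || g b a.

Definition pa (g : rel N) (a : N) : {set N} := [set b | g b a].

Definition in_Upsilon (a : N) (B : {set N}) : bool := (a \notin B) && (B != set0).

Definition eta (g : rel N) (a : N) (B : {set N}) : R :=
  if B == pa g a then 1 else 0.

Definition pairing (o e : N -> {set N} -> R) : R :=
  \sum_(a : N) \sum_(B : {set N} | in_Upsilon a B) o a B * e a B.

Definition mCk (C : {set N}) (k : nat) (S : {set N}) : R :=
  Num.max 0 (#|S :&: C|%:R - k%:R).

Definition obj (m : {set N} -> R) (a : N) (B : {set N}) : R :=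
  m (a |: B) - m B.

End Defs.

(* m_{C,k}(S) = (|S :&: C| - k)_+ is a convex function of the modular
   function |S :&: C|, hence supermodular, and its increment at a \notin B is 1
   exactly when a \in C and |B :&: C| >= k, and 0 otherwise.
   Let m = m1 + m2 with m1, m2 standardized supermodular. Both summands are
   nonnegative with nonnegative increments that grow along chains, so m1
   vanishes where m does, its increment vanishes where that of m does, and
   where the increment of m is 1 the increment of m1 does not depend on B.
   Adding a, b \in C in either order to a (k-1)-subset of C :\ a :\ b, on
   whose extensions by one element m1 vanishes, shows that it does not depend
   on a either; hence m1 is a multiple of m.
   In a full graph the numbers |pa a :&: C|, a \in C, are pairwise distinct
   and below |C|, so exactly |C| - k of them are at least k. *)

From mathcomp Require Import all_boot all_order all_algebra.
From mathcomp Require Import lra zify.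
Set Implicit Arguments.
Unset Strict Implicit.
Unset Printing Implicit Defensive.
Import Order.TTheory GRing.Theory Num.Theory.
Local Open Scope ring_scope.

Section FinsetFacts.
Variable T : finType.
Implicit Types (A B C : {set T}) (a : T).

Lemma setU1_ind (P : {set T} -> Prop) :
  P set0 -> (forall a A, a \notin A -> P A -> P (a |: A)) -> forall A, P A.
Proof.
move=> P0 PU1 A; have [n] := ubnP #|A|; elim: n A => // n IH A.
have [->|[a aA]] := set_0Vmem A; first by [].
rewrite (cardsD1 a) aA ltnS => cardA; rewrite -(setD1K aA).
by apply: PU1; [rewrite !inE eqxx | exact: IH].
Qed.

Lemma exists_subset_card A n : (n <= #|A|)%N -> exists2 B : {set T}, B \subset A & #|B| = n.
Proof.
move=> nA; exists [set x in take n (enum A)].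
  by apply/subsetP=> x; rewrite inE => /mem_take; rewrite mem_enum.
by rewrite cardsE (card_uniqP _) ?take_uniq ?enum_uniq // size_takel -?cardE.
Qed.

Lemma set1I_eq0 a A : a \notin A -> [set a] :&: A = set0.
Proof. by move=> aA; apply/setP=> x; rewrite !inE; case: eqP => // ->; rewrite (negbTE aA). Qed.

Lemma cardsU1I a B C : a \notin B -> #|(a |: B) :&: C| = ((a \in C) + #|B :&: C|)%N.
Proof.
move=> aB; rewrite setIUl; have [aC|aC] := boolP (a \in C).
  by rewrite (setIidPl _) ?sub1set // cardsU1 inE (negbTE aB).
by rewrite set1I_eq0 ?set0U.
Qed.

End FinsetFacts.

Section StdSupermodular.
Context {R : realFieldType} {N : finType} {f : {set N} -> R}.
Hypothesis f_std : std_supermod f.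
Implicit Types (a : N) (B S : {set N}).

Lemma std_supermod_obj_ge0 a B : 0 <= obj f a B.
Proof.
have [f_st f_sm] := f_std; have := f_sm B [set a].
rewrite setUC (f_st [set a]) ?cards1 // (f_st (B :&: [set a])); last first.
  by rewrite -(cards1 a) subset_leq_card ?subsetIr.
by rewrite /obj; lra.
Qed.

Lemma std_supermod_obj_mono a B B' :
  B \subset B' -> a \notin B' -> obj f a B <= obj f a B'.
Proof.
move=> BB' aB'; have := f_std.2 (a |: B) B'.
rewrite -setUA (setUidPr BB').
have -> : (a |: B) :&: B' = B.
  by rewrite setIUl (setIidPl BB') set1I_eq0 ?set0U.
by rewrite /obj; lra.
Qed.

Lemma std_supermod_ge0 S : 0 <= f S.
Proof.
elim/setU1_ind: S => [|a B _ fB_ge0]; first by rewrite f_std.1 ?cards0.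
by have := std_supermod_obj_ge0 a B; rewrite /obj; lra.
Qed.

End StdSupermodular.

Section ClusterFunction.
Variables (R : realFieldType) (N : finType) (C : {set N}) (k : nat).
Implicit Types (a : N) (B S : {set N}).
Local Notation m := (mCk R C k).

Lemma mCkE S : m S = (#|S :&: C| - k)%:R.
Proof.
rewrite /mCk; case: (leqP k #|S :&: C|) => kS.
  by rewrite natrB // max_r // subr_ge0 ler_nat.
rewrite (eqP (ltnW kS)) max_l // subr_le0 ler_nat; exact: ltnW.
Qed.

Lemma obj_mCk a B : a \notin B ->
  obj m a B = if (a \in C) && (k <= #|B :&: C|)%N then 1 else 0.
Proof.
move=> aB; rewrite /obj !mCkE cardsU1I // -natrB; last by lia.
by case: (a \in C); case: leqP => kB; apply/eqP; rewrite ?pnatr_eq1 ?pnatr_eq0; lia.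
Qed.

Lemma mCk_std : (0 < k)%N -> std_supermod m.
Proof.
move=> k_gt0; split=> [S S1 | U V].
  by rewrite mCkE (_ : _ - k = 0)%N //; have := subset_leq_card (subsetIl S C); lia.
rewrite !mCkE -!natrD ler_nat.
have : (#|(U :|: V) :&: C| + #|(U :&: V) :&: C| = #|U :&: C| + #|V :&: C|)%N.
  by rewrite setIUl setIIl cardsUI.
have := subset_leq_card (setSI C (subsetIl U V)).
have := subset_leq_card (setSI C (subsetIr U V)).
lia.
Qed.

Lemma mCk_neq0 : (k < #|C|)%N -> m C != 0.
Proof. by move=> kC; rewrite mCkE setIid pnatr_eq0; lia. Qed.

End ClusterFunction.

Section Extremality.
Variables (R : realFieldType) (N : finType) (C : {set N}) (k : nat).
Hypotheses (k_gt0 : (0 < k)%N) (k_ltC : (k < #|C|)%N).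
Local Notation m := (mCk R C k).
Variables m1 m2 : {set N} -> R.
Hypotheses (m1_std : std_supermod m1) (m2_std : std_supermod m2)
  (m_split : forall S, m S = m1 S + m2 S).
Implicit Types (a : N) (B S X Y : {set N}).

Lemma obj_split a B : obj m a B = obj m1 a B + obj m2 a B.
Proof. by rewrite /obj !m_split; lra. Qed.

Lemma mCk_eq0_summand S : m S = 0 -> m1 S = 0.
Proof.
have := std_supermod_ge0 m1_std S; have := std_supermod_ge0 m2_std S.
by rewrite m_split; lra.
Qed.

Lemma obj_eq0_summand a B : obj m a B = 0 -> obj m1 a B = 0.
Proof.
have := std_supermod_obj_ge0 m1_std a B; have := std_supermod_obj_ge0 m2_std a B.
by rewrite obj_split; lra.
Qed.

Lemma obj_summand_subset a X Y : X \subset Y -> a \notin Y -> a \in C ->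
  (k <= #|X :&: C|)%N -> obj m1 a X = obj m1 a Y.
Proof.
move=> XY aY aC kX; have aX : a \notin X by apply: contra aY; apply: (subsetP XY).
have kY : (k <= #|Y :&: C|)%N by apply: leq_trans kX (subset_leq_card (setSI C XY)).
have := std_supermod_obj_mono m1_std XY aY; have := std_supermod_obj_mono m2_std XY aY.
have := obj_split a X; have := obj_split a Y.
by rewrite !obj_mCk // aC kX kY; lra.
Qed.

Lemma obj_summand_same a X Y : a \in C -> a \notin X -> a \notin Y ->
  (k <= #|X :&: C|)%N -> (k <= #|Y :&: C|)%N -> obj m1 a X = obj m1 a Y.
Proof.
move=> aC aX aY kX kY; have aXY : a \notin X :|: Y by rewrite inE negb_or aX.
by rewrite (obj_summand_subset (subsetUl X Y)) // (obj_summand_subset (subsetUr X Y)).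
Qed.

Lemma obj_summand_swap a b X Y : a \in C -> b \in C -> a \notin X -> b \notin Y ->
  (k <= #|X :&: C|)%N -> (k <= #|Y :&: C|)%N -> obj m1 a X = obj m1 b Y.
Proof.
move=> aC bC aX bY kX kY; have [eq_ab|ab] := eqVneq a b.
  by subst b; apply: obj_summand_same.
have [T TC cardT] : exists2 T : {set N}, T \subset C :\ a :\ b & #|T| = k.-1.
  apply: exists_subset_card.
  by have := cardsD1 a C; have := cardsD1 b (C :\ a); rewrite aC !inE eq_sym ab bC; lia.
have TC' : T \subset C by apply: subset_trans TC (subset_trans (subD1set _ _) (subD1set _ _)).
have aT : a \notin T by apply: contra (subsetP TC a) _; rewrite !inE eqxx andbF.
have bT : b \notin T by apply: contra (subsetP TC b) _; rewrite !inE eqxx.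
have kset c : c \in C -> c \notin T -> (k <= #|(c |: T) :&: C|)%N.
  by move=> cC cT; rewrite cardsU1I // cC (setIidPl TC') cardT; lia.
have m1_kset c : c \in C -> c \notin T -> m1 (c |: T) = 0.
  move=> cC cT; apply: mCk_eq0_summand.
  by rewrite mCkE cardsU1I // cC (setIidPl TC') cardT; apply/eqP; rewrite pnatr_eq0; lia.
have aU : a \notin b |: T by rewrite !inE negb_or ab.
have bU : b \notin a |: T by rewrite !inE negb_or eq_sym ab.
rewrite (obj_summand_same aC aX aU) ?kset // (obj_summand_same bC bY bU) ?kset //.
by rewrite /obj setUCA m1_kset ?m1_kset.
Qed.

Lemma mCk_summand_proportional : exists2 l : R, 0 <= l & forall S, m1 S = l * m S.
Proof.
have [c cC] : exists c, c \in C by apply/card_gt0P; apply: leq_ltn_trans k_ltC.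
have cCc : c \notin C :\ c by rewrite !inE eqxx.
have kCc : (k <= #|(C :\ c) :&: C|)%N.
  by rewrite (setIidPl (subD1set C c)); have := cardsD1 c C; rewrite cC; lia.
exists (obj m1 c (C :\ c)); first exact: std_supermod_obj_ge0.
elim/setU1_ind=> [|a B aB m1B]; first by rewrite m1_std.1 ?(mCk_std R C k_gt0).1 ?cards0 ?mulr0.
have -> : m1 (a |: B) = m1 B + obj m1 a B by rewrite /obj; lra.
have -> : m (a |: B) = m B + obj m a B by rewrite /obj; lra.
rewrite m1B mulrDr; have [/andP[aC kB]|Ck] := boolP ((a \in C) && (k <= #|B :&: C|)%N).
  by rewrite (obj_summand_swap aC cC aB cCc kB kCc) obj_mCk // aC kB mulr1.
have objB : obj m a B = 0 by rewrite obj_mCk // (negbTE Ck).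
by rewrite objB (obj_eq0_summand objB) mulr0 !addr0.
Qed.

End Extremality.

Lemma pairing_eta (R : realFieldType) (N : finType) (o : N -> {set N} -> R) (H : rel N) :
  irreflexive H -> pairing o (eta R H) = \sum_(a | pa H a != set0) o a (pa H a).
Proof.
move=> H_irr; rewrite /pairing [RHS]big_mkcond; apply: eq_bigr => a _.
have UpaE : in_Upsilon a (pa H a) = (pa H a != set0) by rewrite /in_Upsilon inE H_irr.
rewrite -UpaE; have [paU|paU] := ifPn.
  rewrite (bigD1 (pa H a)) //= big1 => [|B /andP[_ /negbTE BH]]; last by rewrite /eta BH mulr0.
  by rewrite /eta eqxx mulr1 addr0.
rewrite big1 // => B UB; rewrite /eta; case: eqP => [BH|_]; last by rewrite mulr0.
by move: paU; rewrite -BH UB.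
Qed.

Section FullGraph.
Variables (N : finType) (H : rel N).
Hypothesis H_full : full_graph H.

Lemma full_graph_irr : irreflexive H.
Proof. by move=> a; apply/negP=> Haa; have := H_full.1 a a Haa; rewrite connect0. Qed.

Lemma full_graph_trans a b c : H c a -> H a b -> H c b.
Proof.
move=> Hca Hab; have cb : c != b.
  by apply: contraTneq Hca => ->; apply/negP=> Hba; have := H_full.1 _ _ Hab; rewrite connect1.
case/orP: (H_full.2 c b cb) => // Hbc.
by have := H_full.1 _ _ Hca; rewrite (connect_trans (connect1 Hab) (connect1 Hbc)).
Qed.

Variable C : {set N}.
Local Notation rank a := #|pa H a :&: C|.

Lemma rank_lt a b : H a b -> a \in C -> (rank a < rank b)%N.
Proof.
move=> Hab aC; apply: proper_card; apply/properP; split.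
  by apply/subsetP=> x; rewrite !inE => /andP[Hxa ->]; rewrite (full_graph_trans Hxa Hab).
by exists a; rewrite !inE ?Hab ?aC // full_graph_irr.
Qed.

Lemma rank_ltC a : a \in C -> (rank a < #|C|)%N.
Proof.
move=> aC; apply: proper_card; apply/properP; split; first exact: subsetIr.
by exists a; rewrite // !inE full_graph_irr.
Qed.

Lemma perm_rank : perm_eq [seq rank a | a <- enum C] (iota 0 #|C|).
Proof.
have rank_uniq : uniq [seq rank a | a <- enum C].
  rewrite map_inj_in_uniq ?enum_uniq // => a b; rewrite !mem_enum => aC bC eq_rank.
  apply/eqP; apply: contraT => ab.
  case/orP: (H_full.2 a b ab) => [Hab|Hba].
    by have := rank_lt Hab aC; rewrite eq_rank ltnn.
  by have := rank_lt Hba bC; rewrite eq_rank ltnn.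
have rank_sub : {subset [seq rank a | a <- enum C] <= iota 0 #|C|}.
  by move=> r /mapP[a]; rewrite mem_enum => aC ->; rewrite mem_iota rank_ltC.
have [|_ rank_eq] := uniq_min_size rank_uniq rank_sub.
  by rewrite size_iota size_map -cardE.
exact: uniq_perm rank_uniq (iota_uniq 0 #|C|) rank_eq.
Qed.

Lemma count_rank_ge k : (k <= #|C|)%N ->
  count (fun a => k <= rank a)%N (enum C) = (#|C| - k)%N.
Proof.
move=> kC; rewrite -(count_map (fun a => rank a) (leq k)) (permP perm_rank).
rewrite -(subnKC kC) iotaD count_cat add0n addKn.
rewrite (eq_in_count (a2 := pred0)) ?count_pred0; last first.
  by move=> x; rewrite mem_iota => /andP[_ xk]; rewrite /= leqNgt xk.
rewrite (eq_in_count (a2 := predT)) ?count_predT ?size_iota //.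
by move=> x; rewrite mem_iota => /andP[].
Qed.

End FullGraph.

Lemma pairing_obj_mCk (R : realFieldType) (N : finType) (C : {set N}) (k : nat) (H : rel N) :
  (0 < k)%N -> (k <= #|C|)%N -> full_graph H ->
  pairing (obj (mCk R C k)) (eta R H) = #|C|%:R - k%:R.
Proof.
move=> k_gt0 kC H_full; rewrite (pairing_eta _ (full_graph_irr H_full)) -natrB //.
rewrite -(count_rank_ge H_full kC) -sum1_count big_enum_cond natr_sum big_mkcond [RHS]big_mkcond /=.
apply: eq_bigr => a _; rewrite obj_mCk ?inE ?(full_graph_irr H_full) //.
by case: eqP => [->|//]; rewrite set0I cards0 leqNgt k_gt0 andbF.
Qed.

Theorem lemma9 (R : realFieldType) (N : finType) (C : {set N}) (k : nat) :
  (2 <= #|C|)%N -> (1 <= k <= #|C| - 1)%N ->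
  [/\ extreme (mCk R C k),
      (forall (a : N) (B : {set N}), in_Upsilon a B ->
         obj (mCk R C k) a B =
           (if (a \in C) && (k <= #|B :&: C|)%N then 1 else 0)) &
      (forall H : rel N, full_graph H ->
         pairing (obj (mCk R C k)) (eta R H) = #|C|%:R - k%:R)].
Proof.
move=> _ /andP[k_gt0 k_le]; have k_ltC : (k < #|C|)%N by lia.
split=> [|a B /andP[aB _]|H H_full]; last 2 first.
- exact: obj_mCk.
- by apply: pairing_obj_mCk; rewrite // ltnW.
split; [exact: mCk_std | by exists C; apply: mCk_neq0 |].
move=> m1 m2 m1_std m2_std m_split.
by have [l l_ge0 m1E] := mCk_summand_proportional k_gt0 k_ltC m1_std m2_std m_split; exists l.
Qed.
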